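(* There is an infinite family of instances (temporal graphs $\mathcal G_n$ with parameters $T_{\max},\delta$) such that the witness complexity under the infection-times-only variation grows in $\Omega(|E(\mathcal G_n)|)$, with the implied constant independent of $k$.
   Context: A temporal graph $\mathcal G=(V,E,\lambda)$ with lifetime $T_{\max}$ consists of a finite undirected static graph $(V,E)$ and a labeling $\lambda:E\to\{1,\dots,T_{\max}\}$; edge $e$ is present only at time $\lambda(e)$. Infection model with parameter $\delta$: a set $S\subseteq V\times[0,T_{\max}]$ of at most $k$ seed infections; a seed $(u,t)$ makes $u$ infected at time $t$; otherwise a susceptible node $u$ becomes infected at time $t$ iff some neighbour $v$ infectious at time $t$ has $\lambda(uv)=t$. A node infected at time $t$ is infectious at times $t+1,\dots,t+\delta$ and resistant afterwards. The infection timetable of a round is the set of pairs $(v,t)$ with $v$ infected at time $t$. Under the infection-times-only variation, a witnessing schedule of length $a$ is a sequence $S_1,\dots,S_a$ of seed sets of size at most $k$ such that all labels of $\mathcal G$ are uniquely determined (among labelings of the known static graph) by the infection timetables of these rounds; the witness complexity is the length of a shortest witnessing schedule. *)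

From mathcomp Require Import all_boot.
Set Implicit Arguments. Unset Strict Implicit. Unset Printing Implicit Defensive.

(* A temporal-graph instance: vertex set 'I_n, static graph given by an
   adjacency relation, lifetime T_max, labeling (read on edges only) and
   the infectious-period parameter delta. *)
Record instance := Instance {
  tg_n : nat;
  tg_adj : rel 'I_tg_n;
  tg_T : nat;
  tg_lab : 'I_tg_n -> 'I_tg_n -> nat;
  tg_delta : nat }.

Definition simple_graph n (adj : rel 'I_n) :=
  irreflexive adj /\ symmetric adj.

Arguments tg_adj : clear implicits.
Arguments tg_lab : clear implicits.

Definition valid_labeling n (adj : rel 'I_n) (T : nat) (lab : 'I_n -> 'I_n -> nat) :=
  forall u v, adj u v -> lab u v = lab v u /\ 1 <= lab u v <= T.

Definition num_edges n (adj : rel 'I_n) : nat :=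
  #|[set p : 'I_n * 'I_n | (p.1 < p.2) && adj p.1 p.2]|.

Section Infection.
Variables (n : nat) (adj : rel 'I_n) (lab : 'I_n -> 'I_n -> nat) (delta : nat)
          (seed : 'I_n -> nat -> bool).

(* f v = Some s : v was infected at time s *)
Definition infectious (f : 'I_n -> option nat) (v : 'I_n) (t : nat) : bool :=
  if f v is Some s then (s < t) && (t <= s + delta) else false.

Definition newly_infected (f : 'I_n -> option nat) (t : nat) (u : 'I_n) : bool :=
  (f u == None) &&
  (seed u t || [exists v, [&& adj u v, infectious f v t & lab u v == t]]).

Fixpoint inf_before (t : nat) : 'I_n -> option nat :=
  match t with
  | 0 => fun _ => None
  | t'.+1 => fun u =>
      let f := inf_before t' in
      if f u is Some s then Some s
      else if newly_infected f t' u then Some t' else None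
  end.
End Infection.

Definition seedset (G : instance) := {set 'I_(tg_n G) * 'I_(tg_T G).+1}.


Definition seedP (G : instance) (S : seedset G) (u : 'I_(tg_n G)) (t : nat) : bool :=
  [exists p in S, (p.1 == u) && (nat_of_ord p.2 == t)].

(* infection timetable of a round with seed set S under labeling lab:
   the map v |-> infection time of v (None if never infected); this
   encodes the set of pairs (v,t) with v infected at time t. *)
Definition timetable (G : instance) (lab : 'I_(tg_n G) -> 'I_(tg_n G) -> nat)
  (S : seedset G) : 'I_(tg_n G) -> option nat :=
  inf_before (tg_adj G) lab (tg_delta G) (@seedP G S) (tg_T G).+1.

Arguments timetable : clear implicits.

Definition witnessing (G : instance) (k : nat) (sched : seq (seedset G)) : Prop :=
  (forall S, S \in sched -> #|S| <= k) /\
  forall lab' : 'I_(tg_n G) -> 'I_(tg_n G) -> nat,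
    valid_labeling (tg_adj G) (tg_T G) lab' ->
    (forall S, S \in sched -> timetable G lab' S =1 timetable G (tg_lab G) S) ->
    forall u v, tg_adj G u v -> lab' u v = tg_lab G u v.

Arguments witnessing : clear implicits.

Definition instance_ok (G : instance) : Prop :=
  simple_graph (tg_adj G) /\ valid_labeling (tg_adj G) (tg_T G) (tg_lab G) /\
  0 < tg_delta G.

From mathcomp Require Import all_boot zify.
Set Implicit Arguments. Unset Strict Implicit. Unset Printing Implicit Defensive.

(* The family is the star K_{1,n} whose edge to leaf i is labelled i, with
   lifetime n^2 and delta = 1.  With delta = 1 a node infected at time s can
   only transmit at time s+1, so in a round where the centre is infected at
   time s (or never), relabelling the edge to a leaf l from l to a changes no
   infection time as long as l <> s, l <> s+1, a <> s+1, and a is not one past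
   a seed time of l.  Over m rounds with k seeds each, this excludes at most
   2m leaves and, for a fixed leaf, at most 1 + 2m + km labels; if 3m < n and
   k + 3 <= n, some leaf and some label in [1, n^2] survive, so the schedule
   does not determine the labeling.  Hence a witnessing schedule has >= |E|/3 rounds. *)

Lemma eq_newly_infected n (adj : rel 'I_n) lab delta seed (f g : 'I_n -> option nat) t u :
  f =1 g ->
  newly_infected adj lab delta seed f t u = newly_infected adj lab delta seed g t u.
Proof.
move=> fg; rewrite /newly_infected /infectious fg; congr (_ && (_ || _)).
by apply: eq_existsb => v; rewrite fg.
Qed.

Section InfectionRun.
Variables (n : nat) (adj : rel 'I_n) (lab : 'I_n -> 'I_n -> nat) (delta : nat)
          (seed : 'I_n -> nat -> bool).
Local Notation F := (inf_before adj lab delta seed).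

Lemma inf_beforeS t u : F t.+1 u =
  if F t u is Some s then Some s
  else if newly_infected adj lab delta seed (F t) t u then Some t else None.
Proof. by []. Qed.

Lemma inf_before_mono t t' u s : t <= t' -> F t u = Some s -> F t' u = Some s.
Proof.
move=> le_tt' Ftu; elim: t' le_tt' => [|t' IH]; first by rewrite leqn0 => /eqP <-.
rewrite leq_eqVlt ltnS => /orP [/eqP <- //|].
by move/IH; rewrite inf_beforeS => ->.
Qed.

Lemma inf_before_Some_newly_infected t u s :
  F t u = Some s -> F s u = None /\ newly_infected adj lab delta seed (F s) s u.
Proof.
elim: t => [//|t IH] /=.
case Ftu: (F t u) => [s'|]; first by move=> [s's]; apply: IH; rewrite Ftu s's.
by case: ifP => // new_u [<-].
Qed.

Lemma inf_before_eq_lab (lab' : 'I_n -> 'I_n -> nat) T :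
  (forall t u v, t < T -> adj u v -> F t u = None -> infectious delta (F t) v t ->
     (lab' u v == t) = (lab u v == t)) ->
  forall t, t <= T -> inf_before adj lab' delta seed t =1 F t.
Proof.
move=> same_events; elim=> [//|t IH] lt_tT u /=.
have IHt := IH (ltnW lt_tT); rewrite IHt.
case Ftu: (F t u) => [//|].
rewrite (eq_newly_infected _ _ _ _ _ _ IHt) /newly_infected Ftu /=.
congr (if _ || _ then _ else _); apply: eq_existsb => v.
by case: (boolP (adj u v)) (boolP (infectious delta (F t) v t)) => [uv|//] [inf_v|] //=;
  rewrite same_events.
Qed.

End InfectionRun.

Lemma infectious1_Some n (f : 'I_n -> option nat) v t :
  infectious 1 f v t -> exists2 s, f v = Some s & t = s.+1.
Proof. by rewrite /infectious; case: (f v) => // s /andP [? ?]; exists s => //; lia. Qed.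

Definition relabel_edge n (lab : 'I_n -> 'I_n -> nat) (x y : 'I_n) (a : nat)
    (u v : 'I_n) : nat :=
  if ((u == x) && (v == y)) || ((u == y) && (v == x)) then a else lab u v.

Lemma relabel_edge_id n (lab : 'I_n -> 'I_n -> nat) x y a : relabel_edge lab x y a x y = a.
Proof. by rewrite /relabel_edge !eqxx. Qed.

Lemma valid_relabel_edge n (adj : rel 'I_n) T lab x y a :
  valid_labeling adj T lab -> 0 < a <= T -> valid_labeling adj T (relabel_edge lab x y a).
Proof.
move=> lab_ok a_ok u v uv; have [lab_sym lab_range] := lab_ok u v uv.
rewrite /relabel_edge [(v == x) && _]andbC [(v == y) && _]andbC orbC -lab_sym.
by case: ifP.
Qed.

Lemma exists_notin (T : eqType) (r s : seq T) :
  uniq r -> size s < size r -> exists2 x, x \in r & x \notin s.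
Proof.
move=> r_uniq lt_sr; have [/allP r_sub_s|/allPn [x xr xs]] := boolP (all (mem s) r).
  by have := uniq_leq_size r_uniq r_sub_s; rewrite leqNgt lt_sr.
by exists x.
Qed.

Lemma size_flatten_map_leq (T : eqType) (U : Type) (f : T -> seq U) (s : seq T) b :
  (forall x, x \in s -> size (f x) <= b) -> size (flatten (map f s)) <= b * size s.
Proof.
elim: s => //= x s IH fb; rewrite size_cat mulnS leq_add ?fb ?mem_head //.
by apply: IH => y sy; apply: fb; rewrite inE sy orbT.
Qed.

Section ForbiddenTimes.
Variables (G : instance) (sched : seq (seedset G)) (v : 'I_(tg_n G)).

Definition infection_windows : seq nat :=
  flatten [seq if timetable G (tg_lab G) X v is Some s then [:: s; s.+1] else [::]
          | X <- sched].

Definition seed_successor_times : seq nat :=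
  flatten [seq [seq (val p.2).+1 | p <- enum X & p.1 == v] | X : seedset G <- sched].

Lemma size_infection_windows : size infection_windows <= 2 * size sched.
Proof. by apply: size_flatten_map_leq => X _; case: (timetable _ _ _ _). Qed.

Lemma mem_infection_windows X s : X \in sched ->
  timetable G (tg_lab G) X v = Some s ->
  (s \in infection_windows) && (s.+1 \in infection_windows).
Proof.
by move=> X_in vs; apply/andP; split; apply/flatten_mapP; exists X; rewrite // vs !inE eqxx ?orbT.
Qed.

Lemma size_seed_successor_times k : (forall X, X \in sched -> #|X| <= k) ->
  size seed_successor_times <= k * size sched.
Proof.
move=> small; apply: size_flatten_map_leq => X X_in.
by rewrite size_map size_filter (leq_trans (count_size _ _)) // -cardE small.
Qed.

Lemma mem_seed_successor_times X t :
  X \in sched -> seedP X v t -> t.+1 \in seed_successor_times.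
Proof.
move=> X_in /exists_inP [p p_in /andP [/eqP pv /eqP pt]]; apply/flatten_mapP; exists X => //.
by apply/mapP; exists p; [rewrite mem_filter mem_enum p_in pv eqxx | rewrite -pt].
Qed.

End ForbiddenTimes.

Definition star_adj n : rel 'I_n.+1 := fun u v => (u == ord0) != (v == ord0).
Definition star_lab n (u v : 'I_n.+1) : nat := u + v.
Definition star n : instance := @Instance n.+1 (@star_adj n) (n * n) (@star_lab n) 1.

Lemma neq_ord0 n (v : 'I_n.+1) : (v != ord0) = (0 < v).
Proof. by rewrite lt0n. Qed.

Lemma star_adj0l n (v : 'I_n.+1) : star_adj ord0 v = (v != ord0).
Proof. by rewrite /star_adj eqxx. Qed.

Lemma star_adj_leaf n (u v : 'I_n.+1) : u != ord0 -> star_adj u v = (v == ord0).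
Proof. by rewrite /star_adj => /negbTE ->; case: (v == ord0). Qed.

Lemma star_lab0l n (v : 'I_n.+1) : star_lab ord0 v = v.
Proof. exact: add0n. Qed.

Lemma star_labr0 n (u : 'I_n.+1) : star_lab u ord0 = u.
Proof. exact: addn0. Qed.

Lemma star_ok n : instance_ok (star n).
Proof.
split; [split|split] => //=.
- by move=> u; rewrite /star_adj eqxx.
- by move=> u v; rewrite /star_adj eq_sym.
move=> u v; rewrite /star_adj /star_lab addnC => uv; split=> //.
have := ltn_ord u; have := ltn_ord v.
case: (u =P ord0) uv => [->|/eqP]; case: (v =P ord0) => [->|/eqP] //=; rewrite ?neq_ord0; nia.
Qed.

Lemma num_edges_star n : num_edges (@star_adj n) = n.
Proof.
rewrite /num_edges.
have -> : [set p : 'I_n.+1 * 'I_n.+1 | (p.1 < p.2) && star_adj p.1 p.2] =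
          [set (ord0, v) | v in [set~ ord0]].
  apply/setP => -[u v]; rewrite inE /= /star_adj; apply/andP/imsetP => [[]|[w]].
  - case: (u =P ord0) => [-> _ v0|_ + v0] /=; first by exists v; rewrite ?inE.
    by move: v0 => /negPn /eqP ->.
  - by rewrite !inE => w0 [-> ->]; rewrite eqxx w0 -neq_ord0.
by rewrite card_imset => [|v w []]; rewrite ?cardsC1 ?card_ord.
Qed.

Section StarRelabel.
Variables (n T : nat) (seed : 'I_n.+1 -> nat -> bool) (l : 'I_n.+1) (a : nat).
Hypothesis l_leaf : l != ord0.
Local Notation F := (inf_before (@star_adj n) (@star_lab n) 1 seed).
Hypothesis centre_time_avoided :
  forall s, F T ord0 = Some s -> [/\ l != s :> nat, l != s.+1 :> nat & a != s.+1].
Hypothesis seed_time_avoided : forall t, seed l t -> t.+1 != a.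

Lemma star_no_transmission_to_centre t :
  t < T -> F t ord0 = None -> infectious 1 (F t) l t -> (a == t) = (l == t :> nat).
Proof.
move=> lt_tT centre_sus l_inf; have [s Fl ts] := infectious1_Some l_inf; subst t.
have l_ne : l != s.+1 :> nat.
  apply/eqP=> ls.
  have centre_new :
      newly_infected (@star_adj n) (@star_lab n) 1 seed (F s.+1) s.+1 ord0.
    rewrite /newly_infected centre_sus eqxx /=; apply/orP; right; apply/existsP; exists l.
    by rewrite star_adj0l l_leaf l_inf star_lab0l ls eqxx.
  have : F T ord0 = Some s.+1.
    by apply: (inf_before_mono lt_tT); rewrite inf_beforeS centre_sus centre_new.
  by case/centre_time_avoided; rewrite ls eqxx.
have a_ne : a != s.+1.
  apply/eqP=> as1; have [Fs_l] := inf_before_Some_newly_infected Fl.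
  rewrite /newly_infected Fs_l /= => /orP [/seed_time_avoided|]; first by rewrite as1 eqxx.
  case/existsP=> w /and3P [lw w_inf _]; have [x Fw _] := infectious1_Some w_inf.
  move: lw; rewrite star_adj_leaf // => /eqP w0.
  by move: centre_sus; rewrite -w0 (inf_before_mono (leqnSn s) Fw).
by rewrite (negbTE l_ne) (negbTE a_ne).
Qed.

Lemma star_no_transmission_to_leaf t :
  t < T -> infectious 1 (F t) ord0 t -> (a == t) = (l == t :> nat).
Proof.
move=> lt_tT /infectious1_Some [s Fc ts]; subst t.
have [_ l_ne a_ne] := centre_time_avoided (inf_before_mono (ltnW lt_tT) Fc).
by rewrite (negbTE l_ne) (negbTE a_ne).
Qed.

Lemma star_relabel_inf_before t : t <= T ->
  inf_before (@star_adj n) (relabel_edge (@star_lab n) ord0 l a) 1 seed t =1 F t.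
Proof.
apply: inf_before_eq_lab => {}t u v lt_tT _ u_sus v_inf.
rewrite /relabel_edge; case: ifP => [/orP [] /andP [/eqP -> /eqP ->]|//] in u_sus v_inf *.
- by rewrite star_lab0l star_no_transmission_to_centre.
- by rewrite star_labr0 star_no_transmission_to_leaf.
Qed.

End StarRelabel.

Lemma star_witnessing_size n k (sched : seq (seedset (star n))) :
  k.+3 <= n -> witnessing (star n) k sched -> n <= 3 * size sched.
Proof.
move=> k_small [sched_k sched_wit]; rewrite leqNgt; apply/negP => short.
set W := infection_windows sched ord0.
have W_size : size W <= 2 * size sched by exact: size_infection_windows.
have seeds_size := size_seed_successor_times _ sched_k.
set m := size sched in short W_size seeds_size.
have [i] : exists2 i, i \in iota 1 n & i \notin W.
  apply: exists_notin; rewrite ?iota_uniq // size_iota.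
  by apply: leq_ltn_trans W_size _; lia.
rewrite mem_iota => /andP [i_pos i_le] iW.
pose l : 'I_n.+1 := inord i.
have lE : l = i :> nat by rewrite /l inordK //; lia.
have [a] : exists2 a, a \in iota 1 (n * n) &
                     a \notin i :: W ++ seed_successor_times sched l.
  apply: exists_notin; rewrite ?iota_uniq // size_iota /= size_cat.
  apply: (@leq_ltn_trans (2 * m + k * m).+1); first by rewrite ltnS leq_add ?seeds_size.
  have : (k + 2) * m <= n.-1 * n.-1 by apply: leq_mul; lia.
  nia.
move=> a_range; rewrite inE mem_cat negb_or => /andP [a_ne_i /norP [aW aS]].
have same_timetables : forall X, X \in sched ->
    timetable (star n) (relabel_edge (@star_lab n) ord0 l a) X =1
    timetable (star n) (@star_lab n) X.
  move=> X X_in; apply: (star_relabel_inf_before (T := (n * n).+1)) => //.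
  - by rewrite neq_ord0 lE.
  - move=> s /(mem_infection_windows X_in) /andP [sW s1W]; rewrite lE.
    split; first by apply: contraNneq iW => ->.
      by apply: contraNneq iW => ->.
    by apply: contraNneq aW => ->.
  - by move=> t /(mem_seed_successor_times X_in) tS; apply: contraNneq aS => <-.
have l_adj : star_adj ord0 l by rewrite star_adj0l neq_ord0 lE.
have a_valid : 0 < a <= n * n by move: a_range; rewrite mem_iota; lia.
have lab'_ok := valid_relabel_edge ord0 l (star_ok n).2.1 a_valid.
have := sched_wit _ lab'_ok same_timetables _ _ l_adj.
by rewrite relabel_edge_id /= star_lab0l lE => /eqP; rewrite (negbTE a_ne_i).
Qed.

Theorem mainTheorem18 :
  exists (G : nat -> instance) (c_num c_den : nat),
    0 < c_num /\ 0 < c_den /\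
    (forall n, instance_ok (G n) /\ n <= num_edges (tg_adj (G n))) /\
    forall k : nat, exists N : nat, forall n : nat, N <= n ->
      forall sched : seq (seedset (G n)),
        witnessing (G n) k sched ->
        c_num * num_edges (tg_adj (G n)) <= c_den * size sched.
Proof.
exists star, 1, 3; do 2 split => //; split.
  by move=> n; rewrite /= num_edges_star; split; [exact: star_ok|].
move=> k; exists k.+3 => n k_small sched sched_wit.
by rewrite /= num_edges_star mul1n; exact: star_witnessing_size sched_wit.
Qed.
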